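(* Under the setting below, let $\lambda^\dagger=\inf\{\lambda\ge 0: A(\lambda)\le Q\}$ (with $\inf\emptyset=+\infty$) and $\lambda^*=\min(\pi,\lambda^\dagger)$. Then the primal point $(x_t^*,z_t^* )=W_t(\lambda^* )$ for all $t$, together with $s^*=\max\big(0,\sum_{t=1}^T\tilde h_t(x_t^*,z_t^* )-Q\big)$ and the shadow price $\lambda^*$ as multiplier of (C) (and suitable nonnegative multipliers for the other constraints), satisfies the KKT conditions of (P).
   Context: Fix an integer $T\ge 1$, a data cap $Q>0$ and an overage fee $\pi>0$. For each $t\in\{1,\dots,T\}$ fix reals $d_t\ge 0$, $r_t\ge 0$, $c_t>0$, $p_t>0$, $\theta_t>0$, $\beta_t>0$ and functions $u_t,e_t:[0,\infty)\to\mathbb{R}$ such that: $u_t$ is continuous, increasing and strictly concave, differentiable on $(0,\infty)$, and $u_t':(0,\infty)\to(0,\infty)$ is a strictly decreasing bijection with inverse $u_t'^{-1}$; $e_t$ is increasing, strictly convex and continuously differentiable, and $e_t':[0,\infty)\to[0,\infty)$ is a strictly increasing bijection with inverse $e_t'^{-1}$. For $0\le z\le x\le 1$ let $\tilde f_t(x,z)=\theta_t u_t(x)-\beta_t e_t((x-z)c_t)-p_t c_t z$ and $\tilde h_t(x,z)=d_t x+r_t z$. Problem (P): maximize $\sum_{t=1}^T \tilde f_t(x_t,z_t)-\pi s$ over $x,z\in\mathbb{R}^T$, $s\in\mathbb{R}$, subject to $0\le z_t\le x_t\le 1$ for all $t$, $s\ge 0$, and (C): $s\ge \sum_{t=1}^T\tilde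 h_t(x_t,z_t)-Q$. A KKT point of (P) consists of a feasible $(x^*,z^*,s^* )$ and nonnegative Lagrange multipliers for all constraints satisfying stationarity of the Lagrangian and complementary slackness; $\lambda^*$ denotes the multiplier of (C) (the shadow price of wireless data). For $\lambda\ge 0$ and $\beta>0$ write $a_t(\beta,\lambda)=\frac{1}{c_t}\,e_t'^{-1}\!\Big(\frac{p_tc_t+r_t\lambda}{\beta c_t}\Big)$ and $X_t(\lambda)=p_tc_t+(d_t+r_t)\lambda$. Define the sets (all with $\beta>0$): $\Omega^{I}_t(\lambda)=\{(\beta,\theta):\theta>\frac{\beta c_t e_t'(c_t)+d_t\lambda}{u_t'(1)},\ \beta<\frac{p_tc_t+r_t\lambda}{c_te_t'(c_t)}\}$; $\Omega^{II}_t(\lambda)=\{(\beta,\theta):\theta>\frac{X_t(\lambda)}{u_t'(1)},\ \beta\ge\frac{p_tc_t+r_t\lambda}{c_te_t'(c_t)}\}$; $\Omega^{III}_t(\lambda)=\{(\beta,\theta):\frac{X_t(\lambda)}{u_t'(a_t(\beta,\lambda))}\le\theta\le\frac{X_t(\lambda)}{u_t'(1)}\}$; $\Omega^{IV}_t(\lambda)=\{(\beta,\theta):\theta<\frac{X_t(\lambda)}{u_t'(a_t(\beta,\lambda))},\ \theta\le\frac{\beta c_te_t'(c_t)+d_t\lambda}{u_t'(1)}\}$. Let $z^{II}_t(\lambda)=1-a_t(\beta_t,\lambda)$, $x^{III}_t(\lambda)=u_t'^{-1}(X_t(\lambda)/\theta_t)$, $z^{III}_t(\lambda)=x^{III}_t(\lambda)-a_t(\beta_t,\lambda)$,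 and let $x^{IV}_t(\lambda)\in(0,1]$ be the solution of $\theta_tu_t'(x)-\beta_tc_te_t'(xc_t)=d_t\lambda$. Define $W_t(\lambda)=(1,0)$ if $(\beta_t,\theta_t)\in\Omega^I_t(\lambda)$; $(1,z^{II}_t(\lambda))$ if in $\Omega^{II}_t(\lambda)$; $(x^{III}_t(\lambda),z^{III}_t(\lambda))$ if in $\Omega^{III}_t(\lambda)$; $(x^{IV}_t(\lambda),0)$ if in $\Omega^{IV}_t(\lambda)$. Define the potential data usage $A(\lambda)=\sum_{t=1}^T\tilde h_t(W_t(\lambda))$. *)

From Stdlib Require Import Reals Lra ClassicalEpsilon.
From Coquelicot Require Import Coquelicot.
Open Scope R_scope.

Definition u_hyp (u du iu : R -> R) : Prop :=
  (forall x, 0 <= x -> filterlim u (within (fun y => 0 <= y) (locally x)) (locally (u x))) /\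
  (forall x y, 0 <= x -> x <= y -> u x <= u y) /\
  (forall x y l, 0 <= x -> 0 <= y -> x <> y -> 0 < l < 1 ->
      l * u x + (1 - l) * u y < u (l * x + (1 - l) * y)) /\
  (forall x, 0 < x -> is_derive u x (du x)) /\
  (forall x, 0 < x -> 0 < du x) /\
  (forall x y, 0 < x -> x < y -> du y < du x) /\
  (forall y, 0 < y -> exists x, 0 < x /\ du x = y) /\
  (forall y, 0 < y -> 0 < iu y /\ du (iu y) = y).

Definition e_hyp (e de ie : R -> R) : Prop :=
  (forall x y, 0 <= x -> x <= y -> e x <= e y) /\
  (forall x y l, 0 <= x -> 0 <= y -> x <> y -> 0 < l < 1 ->
      e (l * x + (1 - l) * y) < l * e x + (1 - l) * e y) /\
  (forall x, 0 <= x ->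
      filterlim (fun y => (e y - e x) / (y - x))
        (within (fun y => 0 <= y /\ y <> x) (locally x)) (locally (de x))) /\
  (forall x, 0 <= x -> filterlim de (within (fun y => 0 <= y) (locally x)) (locally (de x))) /\
  (forall x, 0 <= x -> 0 <= de x) /\
  (forall x y, 0 <= x -> x < y -> de x < de y) /\
  (forall y, 0 <= y -> exists x, 0 <= x /\ de x = y) /\
  (forall y, 0 <= y -> 0 <= ie y /\ de (ie y) = y).

Definition a_val (ie : R -> R) (c p r be lam : R) : R :=
  / c * ie ((p * c + r * lam) / (be * c)).

Definition X_val (c p d r lam : R) : R := p * c + (d + r) * lam.

Definition OmegaI (du de : R -> R) (c p d r lam be th : R) : Prop :=
  0 < be /\ (be * c * de c + d * lam) / du 1 < th /\
  be < (p * c + r * lam) / (c * de c).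

Definition OmegaII (du de : R -> R) (c p d r lam be th : R) : Prop :=
  0 < be /\ X_val c p d r lam / du 1 < th /\
  (p * c + r * lam) / (c * de c) <= be.

Definition OmegaIII (du ie : R -> R) (c p d r lam be th : R) : Prop :=
  0 < be /\ X_val c p d r lam / du (a_val ie c p r be lam) <= th /\
  th <= X_val c p d r lam / du 1.

Definition OmegaIV (du de ie : R -> R) (c p d r lam be th : R) : Prop :=
  0 < be /\ th < X_val c p d r lam / du (a_val ie c p r be lam) /\
  th <= (be * c * de c + d * lam) / du 1.

(* x^{IV}_t(lam): the solution in (0,1] of th u'(x) - be c e'(x c) = d lam
   (chosen by Hilbert's epsilon; it is unique when it exists). *)
Definition xIV (du de : R -> R) (c d th be lam : R) : R :=
  epsilon (inhabits 0)
    (fun x => 0 < x <= 1 /\ th * du x - be * c * de (x * c) = d * lam).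

Definition W (du iu de ie : R -> R) (c p d r th be lam : R) : R * R :=
  if excluded_middle_informative (OmegaI du de c p d r lam be th) then (1, 0)
  else if excluded_middle_informative (OmegaII du de c p d r lam be th) then
    (1, 1 - a_val ie c p r be lam)
  else if excluded_middle_informative (OmegaIII du ie c p d r lam be th) then
    let x := iu (X_val c p d r lam / th) in (x, x - a_val ie c p r be lam)
  else if excluded_middle_informative (OmegaIV du de ie c p d r lam be th) then
    (xIV du de c d th be lam, 0)
  else (0, 0) (* unreachable: the four regions cover all (be,th) with be > 0 *).

Definition htilde (d r x z : R) : R := d * x + r * z.

Definition A_usage (T : nat) (d r c p th be : nat -> R) (du iu de ie : nat -> R -> R)
    (lam : R) : R :=
  sum_n_m (fun t => let w := W (du t) (iu t) (de t) (ie t) (c t) (p t) (d t) (r t)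
                                 (th t) (be t) lam in
                    htilde (d t) (r t) (fst w) (snd w)) 1 T.

Definition lam_dagger T Q d r c p th be du iu de ie : Rbar :=
  Glb_Rbar (fun lam => 0 <= lam /\ A_usage T d r c p th be du iu de ie lam <= Q).

(* lam^* = min(pi, lam^dagger) (a finite real since pi is finite) *)
Definition lam_star T Q pi d r c p th be du iu de ie : R :=
  real (Rbar_min (Finite pi) (lam_dagger T Q d r c p th be du iu de ie)).

(* ---------- KKT conditions of problem (P) ----------
   Constraints (written g >= 0) and multipliers:
     z_t >= 0          : al t
     x_t - z_t >= 0    : ga t
     1 - x_t >= 0      : dl t
     s >= 0            : nu
     (C) s - (sum_t h~_t(x_t,z_t) - Q) >= 0 : lam
   Lagrangian  L = sum_t f~_t(x_t,z_t) - pi s + sum_t (al z + ga (x - z) + dl (1 - x))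
                   + nu s + lam (s - sum_t h~_t + Q),
   with  d f~_t/dx = th u'(x) - be c e'((x-z)c),  d f~_t/dz = be c e'((x-z)c) - p c. *)
Definition KKT_point (T : nat) (Q pi : R) (d r c p th be : nat -> R)
    (du de : nat -> R -> R) (x z : nat -> R) (s lam : R) : Prop :=
  (forall t, (1 <= t <= T)%nat -> 0 <= z t /\ z t <= x t /\ x t <= 1) /\
  0 <= s /\
  sum_n_m (fun t => htilde (d t) (r t) (x t) (z t)) 1 T - Q <= s /\
  (* u_t is differentiable at x_t (needed for stationarity to make sense) *)
  (forall t, (1 <= t <= T)%nat -> 0 < x t) /\
  0 <= lam /\
  exists (al ga dl : nat -> R) (nu : R),
    (forall t, (1 <= t <= T)%nat -> 0 <= al t /\ 0 <= ga t /\ 0 <= dl t) /\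
    0 <= nu /\
    (forall t, (1 <= t <= T)%nat ->
       th t * du t (x t) - be t * c t * de t ((x t - z t) * c t)
         + ga t - dl t - lam * d t = 0) /\
    (forall t, (1 <= t <= T)%nat ->
       be t * c t * de t ((x t - z t) * c t) - p t * c t
         + al t - ga t - lam * r t = 0) /\
    - pi + nu + lam = 0 /\
    (forall t, (1 <= t <= T)%nat ->
       al t * z t = 0 /\ ga t * (x t - z t) = 0 /\ dl t * (1 - x t) = 0) /\
    nu * s = 0 /\
    lam * (s - (sum_n_m (fun t => htilde (d t) (r t) (x t) (z t)) 1 T - Q)) = 0.

From Stdlib Require Import Reals Lra Lia Arith ClassicalEpsilon.
From Coquelicot Require Import Coquelicot.
Open Scope R_scope.

(* Problem (P) separates over the periods once the coupling constraint (C) is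
   priced at lam.  For a fixed lam >= 0, W_t(lam) solves the period-t KKT
   system: in each of the four regions Omega^I..IV we exhibit explicit
   multipliers (regionI..regionIV; regions_cover shows that the regions exhaust
   all parameters).  It remains to price (C) correctly: lam_star must satisfy
   A(lam_star) <= Q if lam_star < pi, and A(lam_star) >= Q if lam_star > 0.
   This follows from the definition of lam_star as soon as A is continuous on
   [0, +oo) (shadow_price_threshold).  Since h~_t(W_t(lam)) = d x + r (x - a)^+,
   continuity of A reduces to continuity in lam of the total usage x_t(lam) and
   of the threshold a_t(lam); both are crossing points of functions that are
   strictly decreasing in x and continuous in lam (cont_root).
   The file develops continuity on [0, +oo) and the root lemma, the threshold
   lemma, the per-period analysis (Section Period), the assembly of the global
   KKT system (kkt_assembly), and finally theorem1. *)

Definition near_nonneg (l0 : R) (P : R -> Prop) : Prop :=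
  exists del, 0 < del /\ forall l, 0 <= l -> Rabs (l - l0) < del -> P l.

Definition cont_nonneg (g : R -> R) (l0 : R) : Prop :=
  forall eps, 0 < eps -> near_nonneg l0 (fun l => Rabs (g l - g l0) < eps).

Lemma near_and l0 (P Q : R -> Prop) :
  near_nonneg l0 P -> near_nonneg l0 Q -> near_nonneg l0 (fun l => P l /\ Q l).
Proof.
  intros [d1 [H1 P1]] [d2 [H2 P2]]. exists (Rmin d1 d2). split.
  - apply Rmin_glb_lt; auto.
  - intros l Hl Hd. pose proof (Rmin_l d1 d2). pose proof (Rmin_r d1 d2).
    split; [apply P1 | apply P2]; auto; lra.
Qed.

Lemma near_imp l0 (P Q : R -> Prop) :
  near_nonneg l0 P -> (forall l, 0 <= l -> P l -> Q l) -> near_nonneg l0 Q.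
Proof. intros [d [H1 H2]] H. exists d. split; auto. Qed.

Lemma near_always l0 (P : R -> Prop) : (forall l, 0 <= l -> P l) -> near_nonneg l0 P.
Proof. intros H. exists 1. split; [lra | auto]. Qed.

Lemma cont_above g l0 y : cont_nonneg g l0 -> y < g l0 -> near_nonneg l0 (fun l => y < g l).
Proof.
  intros H Hy. apply (near_imp _ _ _ (H (g l0 - y) ltac:(lra))).
  intros l _. split_Rabs; lra.
Qed.

Lemma cont_below g l0 y : cont_nonneg g l0 -> g l0 < y -> near_nonneg l0 (fun l => g l < y).
Proof.
  intros H Hy. apply (near_imp _ _ _ (H (y - g l0) ltac:(lra))).
  intros l _. split_Rabs; lra.
Qed.

Lemma cont_ext f g l0 :
  0 <= l0 -> (forall l, 0 <= l -> f l = g l) -> cont_nonneg f l0 -> cont_nonneg g l0.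
Proof.
  intros H0 E H eps He. apply (near_imp _ _ _ (H eps He)). intros l Hl. rewrite !E; auto.
Qed.

Lemma cont_lipschitz g l0 K :
  0 <= K -> (forall l, 0 <= l -> Rabs (g l - g l0) <= K * Rabs (l - l0)) -> cont_nonneg g l0.
Proof.
  intros HK H eps He. exists (eps / (K + 1)). split.
  - apply Rdiv_lt_0_compat; lra.
  - intros l Hl Hd. eapply Rle_lt_trans; [apply H; auto|].
    assert (Rabs (l - l0) * (K + 1) < eps).
    { apply (Rmult_lt_compat_r (K + 1)) in Hd; [|lra].
      unfold Rdiv in Hd. rewrite Rmult_assoc, Rinv_l in Hd; lra. }
    pose proof (Rabs_pos (l - l0)). nra.
Qed.

Lemma cont_plus f g l0 :
  cont_nonneg f l0 -> cont_nonneg g l0 -> cont_nonneg (fun l => f l + g l) l0.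
Proof.
  intros Hf Hg eps He.
  apply (near_imp _ _ _ (near_and _ _ _ (Hf (eps / 2) ltac:(lra)) (Hg (eps / 2) ltac:(lra)))).
  intros l _ [A B]. revert A B. split_Rabs; lra.
Qed.

Lemma cont_scal k f l0 : cont_nonneg f l0 -> cont_nonneg (fun l => k * f l) l0.
Proof.
  intros Hf eps He.
  apply (near_imp _ _ _ (Hf (eps / (Rabs k + 1)) ltac:(pose proof (Rabs_pos k);
                                                      apply Rdiv_lt_0_compat; lra))).
  intros l _ H. rewrite <- Rmult_minus_distr_l, Rabs_mult.
  pose proof (Rabs_pos k). pose proof (Rabs_pos (f l - f l0)).
  assert (Rabs (f l - f l0) * (Rabs k + 1) < eps).
  { apply (Rmult_lt_compat_r (Rabs k + 1)) in H; [|lra].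
    unfold Rdiv in H. rewrite Rmult_assoc, Rinv_l in H; lra. }
  nra.
Qed.

Lemma cont_pos_part_sub f g l0 :
  cont_nonneg f l0 -> cont_nonneg g l0 -> cont_nonneg (fun l => Rmax 0 (f l - g l)) l0.
Proof.
  intros Hf Hg eps He.
  apply (near_imp _ _ _ (near_and _ _ _ (Hf (eps / 2) ltac:(lra)) (Hg (eps / 2) ltac:(lra)))).
  intros l _ [A B]. revert A B. unfold Rmax. repeat destruct Rle_dec; split_Rabs; lra.
Qed.

Lemma cont_sum (f : nat -> R -> R) l0 n :
  (forall t, (1 <= t <= n)%nat -> cont_nonneg (f t) l0) ->
  cont_nonneg (fun l => sum_n_m (fun t => f t l) 1 n) l0.
Proof.
  induction n as [|n IH]; intros H eps He.
  - apply near_always. intros l _. rewrite !sum_n_m_zero by lia.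
    unfold zero; simpl. rewrite Rminus_0_r, Rabs_R0. exact He.
  - assert (E : forall l, sum_n_m (fun t => f t l) 1 (S n)
                          = sum_n_m (fun t => f t l) 1 n + f (S n) l)
      by (intros l; rewrite sum_n_Sm by lia; reflexivity).
    apply (near_imp _ _ _ (cont_plus _ _ l0 (IH ltac:(intros t Ht; apply H; lia))
                             (H (S n) ltac:(lia)) eps He)).
    intros l _. rewrite !E. auto.
Qed.

Lemma cont_root (F : R -> R -> R) (rt : R -> R) (lo : R) (hi : Rbar) l0 :
  0 <= l0 ->
  (forall l, 0 <= l -> lo <= rt l /\ Rbar_le (rt l) hi) ->
  (forall l x, 0 <= l -> lo < x -> x < rt l -> 0 < F l x) ->
  (forall l x, 0 <= l -> rt l < x -> Rbar_lt x hi -> F l x < 0) ->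
  (forall x, lo < x -> Rbar_lt x hi -> cont_nonneg (fun l => F l x) l0) ->
  cont_nonneg rt l0.
Proof.
  intros Hl0 Hr Hpos Hneg Hc eps He. destruct (Hr l0 Hl0) as [Rlo Rhi].
  assert (Lower : near_nonneg l0 (fun l => rt l0 - eps < rt l)).
  { destruct (Rle_dec (rt l0 - eps / 2) lo) as [h|h].
    - apply near_always. intros l Hl. destruct (Hr l Hl). lra.
    - assert (Hx1 : Rbar_lt (rt l0 - eps / 2) hi)
        by (apply (Rbar_lt_le_trans _ (rt l0)); [simpl; lra | exact Rhi]).
      apply (near_imp _ _ _ (cont_above _ _ 0 (Hc (rt l0 - eps / 2) ltac:(lra) Hx1)
                               (Hpos l0 (rt l0 - eps / 2) Hl0 ltac:(lra) ltac:(lra)))).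
      intros l Hl Fl. destruct (Rle_dec (rt l0 - eps / 2) (rt l)) as [h'|h']; [lra|].
      exfalso. assert (F l (rt l0 - eps / 2) < 0) by (apply Hneg; auto; lra). lra. }
  assert (Upper : near_nonneg l0 (fun l => rt l < rt l0 + eps)).
  { destruct (Rbar_lt_dec (rt l0 + eps / 2) hi) as [h|h].
    - apply (near_imp _ _ _ (cont_below _ _ 0 (Hc (rt l0 + eps / 2) ltac:(lra) h)
                               (Hneg l0 (rt l0 + eps / 2) Hl0 ltac:(lra) h))).
      intros l Hl Fl. destruct (Rle_dec (rt l) (rt l0 + eps / 2)) as [h'|h']; [lra|].
      exfalso. assert (0 < F l (rt l0 + eps / 2)) by (apply (Hpos l); auto; lra). lra.
    - apply Rbar_not_lt_le in h. apply near_always. intros l Hl.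
      pose proof (Rbar_le_trans _ _ _ (proj2 (Hr l Hl)) h) as Hb. simpl in Hb. lra. }
  apply (near_imp _ _ _ (near_and _ _ _ Lower Upper)).
  intros l _ [A B]. split_Rabs; lra.
Qed.

Lemma shadow_price_threshold (Af : R -> R) (Q pi : R) :
  0 < pi -> (forall l, 0 <= l -> cont_nonneg Af l) ->
  let lam := real (Rbar_min (Finite pi) (Glb_Rbar (fun l => 0 <= l /\ Af l <= Q))) in
  0 <= lam <= pi /\ (lam < pi -> Af lam <= Q) /\ (0 < lam -> Q <= Af lam).
Proof.
  intros Hpi Hc lam.
  destruct (Glb_Rbar_correct (fun l => 0 <= l /\ Af l <= Q)) as [Hlb Hglb].
  assert (H0 : Rbar_le 0 (Glb_Rbar (fun l => 0 <= l /\ Af l <= Q)))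
    by (apply Hglb; intros x [Hx _]; exact Hx).
  unfold lam; clear lam.
  destruct (Glb_Rbar _) as [l| |]; simpl in H0 |- *; try contradiction.
  - assert (Below : forall x, 0 <= x < l -> Q < Af x).
    { intros x Hx. destruct (Rlt_dec Q (Af x)) as [h|h]; auto. exfalso.
      specialize (Hlb x (conj (proj1 Hx) (Rnot_lt_le _ _ h))). simpl in Hlb. lra. }
    assert (At : Af l <= Q).
    { destruct (Rle_dec (Af l) Q) as [h|h]; auto. exfalso.
      destruct (cont_above Af l Q (Hc l H0) ltac:(lra)) as [del [Hd Hn]].
      assert (Hb : Rbar_le (l + del) l).
      { apply Hglb. intros x [Hx HA]. simpl. destruct (Rle_dec (l + del) x); auto.
        specialize (Hlb x (conj Hx HA)). simpl in Hlb.
        assert (Q < Af x) by (apply Hn; auto; split_Rabs; lra). lra. }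
      simpl in Hb. lra. }
    assert (Pos : 0 < l -> Q <= Af l).
    { intros Hl. destruct (Rle_dec Q (Af l)) as [h|h]; auto. exfalso.
      destruct (cont_below Af l Q (Hc l H0) ltac:(lra)) as [del [Hd Hn]].
      set (x := Rmax 0 (l - del / 2)).
      assert (Hx0 : 0 <= x) by apply Rmax_l.
      assert (Hxl : x < l) by (unfold x, Rmax; destruct Rle_dec; lra).
      assert (Hxd : Rabs (x - l) < del) by (unfold x, Rmax; destruct Rle_dec; split_Rabs; lra).
      specialize (Hn x Hx0 Hxd). specialize (Below x (conj Hx0 Hxl)). lra. }
    unfold Rmin. destruct Rle_dec as [h|h].
    + repeat split; try lra. intros _.
      destruct (Req_dec pi l) as [E|E]; [subst; apply Pos; lra|].
      left. apply Below. lra.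
    + repeat split; auto; lra.
  - repeat split; try lra. intros _.
    destruct (Rle_dec Q (Af pi)) as [h|h]; auto. exfalso.
    specialize (Hlb pi (conj (Rlt_le _ _ Hpi) (Rlt_le _ _ (Rnot_le_lt _ _ h)))). exact Hlb.
Qed.

Lemma ivt_on_interval f a b : a < b ->
  (forall x, a <= x <= b -> forall eps, 0 < eps -> exists del, 0 < del /\
     forall y, a <= y <= b -> Rabs (y - x) < del -> Rabs (f y - f x) < eps) ->
  0 < f a -> f b < 0 -> exists x, a <= x <= b /\ f x = 0.
Proof.
  intros Hab Hc Ha Hb.
  (* extend f to R by clamping its argument to [a, b] *)
  set (cl := fun y => Rmax a (Rmin y b)).
  assert (Hcl : forall y, a <= cl y <= b)
    by (intros; unfold cl, Rmax, Rmin; repeat destruct Rle_dec; lra).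
  assert (Hcl_lip : forall y y', Rabs (cl y - cl y') <= Rabs (y - y'))
    by (intros; unfold cl, Rmax, Rmin; repeat destruct Rle_dec; split_Rabs; lra).
  assert (Hcl_id : forall y, a <= y <= b -> cl y = y)
    by (intros; unfold cl, Rmax, Rmin; repeat destruct Rle_dec; lra).
  destruct (IVT (fun y => - f (cl y)) a b) as [z [Hz Fz]]; auto.
  - intros x. unfold continuity_pt, continue_in, limit1_in, limit_in. simpl. unfold R_dist.
    intros eps He. destruct (Hc (cl x) (Hcl x) eps He) as [del [Hd Hdd]].
    exists del. split; auto. intros y [_ Hy].
    replace (- f (cl y) - - f (cl x)) with (- (f (cl y) - f (cl x))) by ring.
    rewrite Rabs_Ropp. apply Hdd; auto. eapply Rle_lt_trans; [apply Hcl_lip | exact Hy].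
  - rewrite Hcl_id; lra.
  - rewrite Hcl_id; lra.
  - exists z. split; auto. rewrite Hcl_id in Fz; auto. lra.
Qed.

Section Period.

Variables (u du iu e de ie : R -> R) (c p d r th be : R).
Hypotheses (HU : u_hyp u du iu) (HE : e_hyp e de ie).
Hypotheses (Hd : 0 <= d) (Hr : 0 <= r) (Hc : 0 < c) (Hp : 0 < p) (Hth : 0 < th) (Hbe : 0 < be).

Lemma du_pos x : 0 < x -> 0 < du x.
Proof. destruct HU as (_&_&_&_&H&_). auto. Qed.

Lemma du_lt x y : 0 < x -> x < y -> du y < du x.
Proof. destruct HU as (_&_&_&_&_&H&_). auto. Qed.

Lemma iu_spec y : 0 < y -> 0 < iu y /\ du (iu y) = y.
Proof. destruct HU as (_&_&_&_&_&_&_&H). auto. Qed.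

Lemma de_nonneg x : 0 <= x -> 0 <= de x.
Proof. destruct HE as (_&_&_&_&H&_). auto. Qed.

Lemma de_lt x y : 0 <= x -> x < y -> de x < de y.
Proof. destruct HE as (_&_&_&_&_&H&_). auto. Qed.

Lemma de_le x y : 0 <= x -> x <= y -> de x <= de y.
Proof. intros Hx [h|h]; [left; apply de_lt | subst]; auto; lra. Qed.

(* e' vanishes at 0: it is an increasing bijection of [0, +oo). *)
Lemma de_zero : de 0 = 0.
Proof.
  destruct HE as (_&_&_&_&_&_&Hs&_).
  destruct (Hs 0 (Rle_refl 0)) as [x [[Hx|Hx] Ex]]; [|subst; auto].
  pose proof (de_lt 0 x (Rle_refl 0) Hx). pose proof (de_nonneg 0 (Rle_refl 0)). lra.
Qed.

(* u' is continuous: a monotone bijection between intervals has no jumps. *)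
Lemma du_cont x0 : 0 < x0 -> forall eps, 0 < eps ->
  exists del, 0 < del /\ forall x, Rabs (x - x0) < del -> 0 < x /\ Rabs (du x - du x0) < eps.
Proof.
  intros Hx0 eps He. pose proof (du_pos x0 Hx0) as Hd0.
  set (y1 := du x0 + eps). set (y2 := Rmax (du x0 - eps) (du x0 / 2)).
  assert (Hy2 : 0 < y2 < du x0 /\ du x0 - eps <= y2)
    by (unfold y2, Rmax; destruct Rle_dec; lra).
  destruct (iu_spec y1 ltac:(unfold y1; lra)) as [Hx1 Ex1].
  destruct (iu_spec y2 ltac:(lra)) as [Hx2 Ex2].
  set (x1 := iu y1) in *. set (x2 := iu y2) in *.
  assert (L1 : x1 < x0).
  { destruct (Rlt_le_dec x1 x0) as [h|[h|h]]; auto.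
    - pose proof (du_lt x0 x1 Hx0 h). unfold y1 in Ex1. lra.
    - rewrite <- h in Ex1. unfold y1 in Ex1. lra. }
  assert (L2 : x0 < x2).
  { destruct (Rlt_le_dec x0 x2) as [h|[h|h]]; auto.
    - pose proof (du_lt x2 x0 Hx2 h). lra.
    - rewrite h in Ex2. lra. }
  exists (Rmin (x0 - x1) (x2 - x0)). split; [apply Rmin_glb_lt; lra|].
  intros x Hx. pose proof (Rmin_l (x0 - x1) (x2 - x0)). pose proof (Rmin_r (x0 - x1) (x2 - x0)).
  assert (A1 : x1 < x) by (revert Hx; split_Rabs; lra).
  assert (A2 : x < x2) by (revert Hx; split_Rabs; lra).
  pose proof (du_lt x1 x Hx1 A1). pose proof (du_lt x x2 ltac:(lra) A2).
  unfold y1 in Ex1. split; [lra|]. split_Rabs; lra.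
Qed.

Lemma de_cont x0 : 0 <= x0 -> forall eps, 0 < eps ->
  exists del, 0 < del /\ forall x, 0 <= x -> Rabs (x - x0) < del -> Rabs (de x - de x0) < eps.
Proof.
  intros Hx0 eps He. destruct HE as (_&_&_&Hc'&_).
  destruct (proj1 (filterlim_locally _ _) (Hc' x0 Hx0) (mkposreal eps He)) as [del Hdel].
  exists del. split; [apply cond_pos|]. intros x Hx Hxd. exact (Hdel x Hxd Hx).
Qed.

Lemma marginal_cost_lt x y : 0 <= x -> x < y -> be * c * de (x * c) < be * c * de (y * c).
Proof. intros Hx Hxy. apply Rmult_lt_compat_l; [nra | apply de_lt; nra]. Qed.

Lemma marginal_cost_le x y : 0 <= x -> x <= y -> be * c * de (x * c) <= be * c * de (y * c).
Proof. intros Hx Hxy. apply Rmult_le_compat_l; [nra | apply de_le; nra]. Qed.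

Lemma a_spec lam : 0 <= lam ->
  0 < a_val ie c p r be lam /\ be * c * de (a_val ie c p r be lam * c) = p * c + r * lam.
Proof.
  intros Hl. set (y := (p * c + r * lam) / (be * c)).
  assert (Hy : 0 < y) by (unfold y; apply Rdiv_lt_0_compat; nra).
  destruct HE as (_&_&_&_&_&_&_&Hie).
  destruct (Hie y (Rlt_le _ _ Hy)) as [[H1|H1] H2].
  - assert (Hac : a_val ie c p r be lam * c = ie y) by (unfold a_val; fold y; field; lra).
    rewrite Hac, H2. split; [unfold a_val; fold y; apply Rmult_lt_0_compat; auto;
                             apply Rinv_0_lt_compat; auto|].
    unfold y. field. lra.
  - rewrite <- H1, de_zero in H2. lra.
Qed.

(* Marginal net value of x at price lam when z is chosen optimally; x_t(lam) is
   the point where it crosses zero (or 1 if it stays nonnegative). *)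
Definition psi (lam x : R) : R :=
  th * du x - Rmin (be * c * de (x * c)) (p * c + r * lam) - d * lam.

Definition period_kkt (lam x z al ga dl : R) : Prop :=
  0 <= al /\ 0 <= ga /\ 0 <= dl /\
  th * du x - be * c * de ((x - z) * c) + ga - dl - lam * d = 0 /\
  be * c * de ((x - z) * c) - p * c + al - ga - lam * r = 0 /\
  al * z = 0 /\ ga * (x - z) = 0 /\ dl * (1 - x) = 0.

Definition W_props (lam x z : R) : Prop :=
  0 < x <= 1 /\ 0 <= z <= x /\ z = Rmax 0 (x - a_val ie c p r be lam) /\
  (psi lam x = 0 \/ (x = 1 /\ 0 <= psi lam 1)) /\
  exists al ga dl, period_kkt lam x z al ga dl.

Lemma regionI lam : 0 <= lam -> OmegaI du de c p d r lam be th -> W_props lam 1 0.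
Proof.
  intros Hl (_&H1&H2). unfold W_props, period_kkt.
  pose proof (du_pos 1 Rlt_0_1) as Hdu1.
  assert (Hdec : 0 < de c) by (rewrite <- de_zero; apply de_lt; lra).
  apply Rlt_div_l in H1; auto. apply Rlt_div_r in H2; [|nra].
  destruct (a_spec lam Hl) as [Ha0 Ha].
  set (a := a_val ie c p r be lam) in *.
  assert (Ha1 : 1 < a).
  { destruct (Rlt_le_dec 1 a) as [h|h]; auto. exfalso.
    pose proof (marginal_cost_le a 1 ltac:(lra) h). rewrite Rmult_1_l in H. nra. }
  repeat split; try lra; [symmetry; apply Rmax_left; lra| |].
  { right. split; auto. unfold psi. rewrite Rmult_1_l.
    pose proof (Rmin_l (be * c * de c) (p * c + r * lam)). nra. }
  exists (p * c + r * lam - be * c * de c), 0, (th * du 1 - be * c * de c - d * lam).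
  replace ((1 - 0) * c) with c by ring.
  repeat split; try nra; try ring.
Qed.

Lemma regionII lam : 0 <= lam -> OmegaII du de c p d r lam be th ->
  W_props lam 1 (1 - a_val ie c p r be lam).
Proof.
  intros Hl (_&H1&H2). unfold W_props, period_kkt.
  pose proof (du_pos 1 Rlt_0_1) as Hdu1.
  assert (Hdec : 0 < de c) by (rewrite <- de_zero; apply de_lt; lra).
  unfold X_val in H1. apply Rlt_div_l in H1; auto. apply Rle_div_l in H2; [|nra].
  destruct (a_spec lam Hl) as [Ha0 Ha].
  set (a := a_val ie c p r be lam) in *.
  assert (Ha1 : a <= 1).
  { destruct (Rlt_le_dec 1 a) as [h|h]; auto. exfalso.
    pose proof (marginal_cost_lt 1 a ltac:(lra) h). rewrite Rmult_1_l in H. nra. }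
  repeat split; try lra; [symmetry; apply Rmax_right; lra| |].
  { right. split; auto. unfold psi. rewrite Rmult_1_l.
    pose proof (Rmin_r (be * c * de c) (p * c + r * lam)). nra. }
  exists 0, 0, (th * du 1 - (p * c + (d + r) * lam)).
  replace ((1 - (1 - a)) * c) with (a * c) by ring.
  repeat split; try nra; try ring.
Qed.

Lemma regionIII lam : 0 <= lam -> OmegaIII du ie c p d r lam be th ->
  let x := iu (X_val c p d r lam / th) in W_props lam x (x - a_val ie c p r be lam).
Proof.
  intros Hl (_&H1&H2) x. unfold W_props, period_kkt.
  pose proof (du_pos 1 Rlt_0_1) as Hdu1.
  destruct (a_spec lam Hl) as [Ha0 Ha].
  set (a := a_val ie c p r be lam) in *.
  pose proof (du_pos a Ha0) as Hdua.
  unfold X_val in *. set (X := p * c + (d + r) * lam) in *.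
  assert (HX : 0 < X) by (unfold X; nra).
  apply Rle_div_l in H1; auto. apply Rle_div_r in H2; auto.
  destruct (iu_spec (X / th) ltac:(apply Rdiv_lt_0_compat; auto)) as [Hx0 Hxv].
  fold x in Hx0, Hxv.
  assert (Hthx : th * du x = X) by (rewrite Hxv; field; lra).
  assert (Hx1 : x <= 1).
  { destruct (Rlt_le_dec 1 x) as [h|h]; auto. pose proof (du_lt 1 x Rlt_0_1 h). nra. }
  assert (Hxa : a <= x).
  { destruct (Rlt_le_dec x a) as [h|h]; auto. pose proof (du_lt x a Hx0 h). nra. }
  pose proof (marginal_cost_le a x ltac:(lra) Hxa).
  unfold X in Hthx.
  repeat split; try lra; [symmetry; apply Rmax_right; lra| |].
  { left. unfold psi. rewrite Rmin_right by nra. nra. }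
  exists 0, 0, 0.
  replace ((x - (x - a)) * c) with (a * c) by ring.
  repeat split; try nra; try ring.
Qed.

Lemma balance_cont x : 0 < x -> forall eps, 0 < eps -> exists del, 0 < del /\
  forall y, 0 <= y -> Rabs (y - x) < del ->
  Rabs (th * du y - be * c * de (y * c) - (th * du x - be * c * de (x * c))) < eps.
Proof.
  intros Hx eps He.
  assert (He1 : 0 < eps / (2 * th)) by (apply Rdiv_lt_0_compat; lra).
  assert (He2 : 0 < eps / (2 * (be * c))) by (apply Rdiv_lt_0_compat; nra).
  destruct (du_cont x Hx _ He1) as [d1 [Hd1 P1]].
  destruct (de_cont (x * c) ltac:(nra) _ He2) as [d2 [Hd2 P2]].
  exists (Rmin d1 (d2 / c)). split; [apply Rmin_glb_lt; auto; apply Rdiv_lt_0_compat; auto|].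
  intros y Hy Hyx. pose proof (Rmin_l d1 (d2 / c)). pose proof (Rmin_r d1 (d2 / c)).
  destruct (P1 y ltac:(lra)) as [_ Q1].
  assert (Q2 : Rabs (de (y * c) - de (x * c)) < eps / (2 * (be * c))).
  { apply P2; [nra|]. replace (y * c - x * c) with ((y - x) * c) by ring.
    rewrite Rabs_mult, (Rabs_pos_eq c) by lra. apply Rlt_div_r; auto; lra. }
  apply Rlt_div_r in Q1; [|lra]. apply Rlt_div_r in Q2; [|nra].
  assert (A1 : Rabs (th * (du y - du x)) < eps / 2)
    by (rewrite Rabs_mult, (Rabs_pos_eq th) by lra; lra).
  assert (A2 : Rabs (be * c * (de (y * c) - de (x * c))) < eps / 2)
    by (rewrite Rabs_mult, (Rabs_pos_eq (be * c)) by nra; lra).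
  revert A1 A2. split_Rabs; lra.
Qed.

(* In region IV the equation th u'(x) - be c e'(x c) = d lam has a root in (0, 1]:
   the left side is large near 0 (u' is unbounded there) and at most d lam at 1. *)
Lemma xIV_exists lam : 0 <= lam -> th * du 1 <= be * c * de c + d * lam ->
  exists x, 0 < x <= 1 /\ th * du x - be * c * de (x * c) = d * lam.
Proof.
  intros Hl H1.
  set (f := fun x => th * du x - be * c * de (x * c) - d * lam).
  pose proof (de_nonneg c ltac:(lra)) as Hdc.
  assert (Hbcd : 0 <= be * c * de c + d * lam)
    by (pose proof (Rmult_le_pos (be * c) _ ltac:(nra) Hdc); nra).
  set (M := (be * c * de c + d * lam) / th + 1).
  assert (HM : 0 < M).
  { unfold M. assert (0 <= (be * c * de c + d * lam) / th)
      by (apply Rmult_le_pos; [exact Hbcd | left; apply Rinv_0_lt_compat; auto]). lra. }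
  destruct (iu_spec M HM) as [Hi1 Hi2].
  (* x0 is a point of (0, 1] where u' is large enough to make f positive *)
  set (x0 := Rmin 1 (iu M)).
  assert (Hx0 : 0 < x0 <= 1) by (unfold x0, Rmin; destruct Rle_dec; lra).
  assert (Hdux0 : M <= du x0).
  { unfold x0, Rmin; destruct Rle_dec as [[h|h]|h].
    - pose proof (du_lt 1 (iu M) Rlt_0_1 h). lra.
    - rewrite h, Hi2. lra.
    - lra. }
  assert (Hf0 : 0 < f x0).
  { unfold f. pose proof (marginal_cost_le x0 1 ltac:(lra) ltac:(lra)). rewrite Rmult_1_l in H.
    assert (th * M = be * c * de c + d * lam + th) by (unfold M; field; lra).
    nra. }
  destruct (Rle_lt_or_eq_dec (f 1) 0) as [Hf1|Hf1]; [unfold f; rewrite Rmult_1_l; lra| |].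
  2:{ exists 1. split; [lra|]. unfold f in Hf1. lra. }
  assert (Hx01 : x0 < 1) by (destruct Hx0 as [_ [h|h]]; auto; rewrite h in Hf0; lra).
  destruct (ivt_on_interval f x0 1) as [x [Hx Fx]]; auto.
  - intros x Hx eps He. destruct (balance_cont x ltac:(lra) eps He) as [del [Hdel P]].
    exists del. split; auto. intros y Hy Hyx. unfold f.
    replace (th * du y - be * c * de (y * c) - d * lam - (th * du x - be * c * de (x * c) - d * lam))
      with (th * du y - be * c * de (y * c) - (th * du x - be * c * de (x * c))) by ring.
    apply P; auto; lra.
  - exists x. split; [lra|]. unfold f in Fx. lra.
Qed.

Lemma regionIV lam : 0 <= lam -> OmegaIV du de ie c p d r lam be th ->
  W_props lam (xIV du de c d th be lam) 0.
Proof.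
  intros Hl (_&H1&H2). unfold W_props, period_kkt.
  pose proof (du_pos 1 Rlt_0_1) as Hdu1.
  apply Rle_div_r in H2; auto.
  destruct (xIV_exists lam Hl H2) as [x0 Hx0].
  destruct (epsilon_spec (inhabits 0)
    (fun x => 0 < x <= 1 /\ th * du x - be * c * de (x * c) = d * lam) (ex_intro _ x0 Hx0))
    as [Hx Hxe].
  fold (xIV du de c d th be lam) in Hx, Hxe. set (x := xIV du de c d th be lam) in *.
  destruct (a_spec lam Hl) as [Ha0 Ha].
  set (a := a_val ie c p r be lam) in *.
  pose proof (du_pos a Ha0) as Hdua.
  unfold X_val in H1. apply Rlt_div_r in H1; auto.
  assert (Hxa : x <= a).
  { destruct (Rlt_le_dec a x) as [h|h]; auto. exfalso.
    pose proof (du_lt a x Ha0 h). pose proof (marginal_cost_lt a x ltac:(lra) h). nra. }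
  pose proof (marginal_cost_le x a ltac:(lra) Hxa).
  repeat split; try lra; [symmetry; apply Rmax_left; lra| |].
  { left. unfold psi. rewrite Rmin_left by nra. lra. }
  exists (p * c + r * lam - be * c * de (x * c)), 0, 0.
  replace ((x - 0) * c) with (x * c) by ring.
  repeat split; try nra; try ring.
Qed.

Lemma regions_cover lam : 0 <= lam ->
  OmegaI du de c p d r lam be th \/ OmegaII du de c p d r lam be th \/
  OmegaIII du ie c p d r lam be th \/ OmegaIV du de ie c p d r lam be th.
Proof.
  intros Hl. unfold OmegaI, OmegaII, OmegaIII, OmegaIV.
  set (K := (be * c * de c + d * lam) / du 1).
  set (X1 := X_val c p d r lam / du 1).
  set (Xa := X_val c p d r lam / du (a_val ie c p r be lam)).
  set (y0 := (p * c + r * lam) / (c * de c)).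
  pose proof (du_pos 1 Rlt_0_1) as Hdu1.
  assert (Hdec : 0 < de c) by (rewrite <- de_zero; apply de_lt; lra).
  destruct (Rlt_le_dec be y0) as [h|h].
  - assert (K < X1).
    { unfold K, X1, X_val. apply Rmult_lt_compat_r; [apply Rinv_0_lt_compat; auto|].
      apply Rlt_div_r in h; nra. }
    destruct (Rlt_le_dec K th); [left; auto|].
    destruct (Rle_lt_dec Xa th); [right; right; left; repeat split; auto; lra|].
    right; right; right; auto.
  - assert (X1 <= K).
    { unfold K, X1, X_val. apply Rmult_le_compat_r; [left; apply Rinv_0_lt_compat; auto|].
      apply Rle_div_l in h; nra. }
    destruct (Rlt_le_dec X1 th); [right; left; auto|].
    destruct (Rle_lt_dec Xa th); [right; right; left; repeat split; auto; lra|].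
    right; right; right; repeat split; auto; lra.
Qed.

Lemma W_spec lam : 0 <= lam ->
  W_props lam (fst (W du iu de ie c p d r th be lam)) (snd (W du iu de ie c p d r th be lam)).
Proof.
  intros Hl. unfold W.
  destruct (excluded_middle_informative _) as [h1|h1]; [apply regionI; auto|].
  destruct (excluded_middle_informative _) as [h2|h2]; [apply regionII; auto|].
  destruct (excluded_middle_informative _) as [h3|h3]; [apply regionIII; auto|].
  destruct (excluded_middle_informative _) as [h4|h4]; [apply regionIV; auto|].
  exfalso. destruct (regions_cover lam Hl) as [?|[?|[?|?]]]; auto.
Qed.


Lemma psi_cont_lam x l0 : cont_nonneg (fun l => psi l x) l0.
Proof.
  apply (cont_lipschitz _ _ (r + d)); [lra|]. intros l Hl. unfold psi.
  set (m := be * c * de (x * c)).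
  assert (Hm : Rabs (Rmin m (p * c + r * l) - Rmin m (p * c + r * l0)) <= r * Rabs (l - l0)).
  { pose proof (Rabs_pos (l - l0)).
    unfold Rmin. repeat destruct Rle_dec; split_Rabs; nra. }
  replace (th * du x - Rmin m (p * c + r * l) - d * l - (th * du x - Rmin m (p * c + r * l0) - d * l0))
    with (- (Rmin m (p * c + r * l) - Rmin m (p * c + r * l0)) - d * (l - l0)) by ring.
  eapply Rle_trans; [apply Rabs_triang|].
  rewrite Rabs_Ropp, Rabs_Ropp, Rabs_mult, (Rabs_pos_eq d) by lra. lra.
Qed.

(* psi is strictly decreasing in x (u' decreases, e' increases). *)
Lemma psi_decreasing lam x y : 0 < x -> x < y -> psi lam y < psi lam x.
Proof.
  intros Hx Hxy. unfold psi.
  pose proof (du_lt x y Hx Hxy).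
  pose proof (marginal_cost_le x y ltac:(lra) ltac:(lra)).
  assert (Rmin (be * c * de (x * c)) (p * c + r * lam) <= Rmin (be * c * de (y * c)) (p * c + r * lam))
    by (unfold Rmin; repeat destruct Rle_dec; lra).
  assert (th * du y < th * du x) by (apply Rmult_lt_compat_l; lra). lra.
Qed.

(* a(lam) is continuous: it is the crossing point of the decreasing function
   x |-> p c + r lam - be c e'(x c), which is continuous in lam. *)
Lemma a_cont l0 : 0 <= l0 -> cont_nonneg (fun l => a_val ie c p r be l) l0.
Proof.
  intros Hl0.
  apply (cont_root (fun l x => p * c + r * l - be * c * de (x * c)) _ 0 p_infty l0 Hl0).
  - intros l Hl. destruct (a_spec l Hl). split; [lra | exact I].
  - intros l x Hl Hx Hxa. destruct (a_spec l Hl) as [_ Ha].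
    pose proof (marginal_cost_lt x (a_val ie c p r be l) ltac:(lra) Hxa). lra.
  - intros l x Hl Hxa _. destruct (a_spec l Hl) as [Ha0 Ha].
    pose proof (marginal_cost_lt (a_val ie c p r be l) x ltac:(lra) Hxa). lra.
  - intros x _ _. apply (cont_lipschitz _ _ r); auto. intros l Hl.
    replace (p * c + r * l - be * c * de (x * c) - (p * c + r * l0 - be * c * de (x * c)))
      with (r * (l - l0)) by ring.
    rewrite Rabs_mult, (Rabs_pos_eq r) by lra. lra.
Qed.

(* The total usage x_t(lam) is continuous: it is the crossing point of psi in (0, 1). *)
Lemma x_cont l0 : 0 <= l0 -> cont_nonneg (fun l => fst (W du iu de ie c p d r th be l)) l0.
Proof.
  intros Hl0. apply (cont_root psi _ 0 1 l0 Hl0).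
  - intros l Hl. destruct (W_spec l Hl) as (Hx&_). simpl. lra.
  - intros l x Hl Hx Hxw. destruct (W_spec l Hl) as (Hw&_&_&Hroot&_).
    pose proof (psi_decreasing l x (fst (W du iu de ie c p d r th be l)) Hx Hxw).
    destruct Hroot as [Hroot|[Hw1 Hroot]]; [lra | rewrite Hw1 in *; lra].
  - intros l x Hl Hwx Hx1. simpl in Hx1. destruct (W_spec l Hl) as (Hw&_&_&Hroot&_).
    destruct Hroot as [Hroot|[Hw1 _]]; [|lra].
    pose proof (psi_decreasing l _ x (proj1 Hw) Hwx). lra.
  - intros x _ _. apply psi_cont_lam.
Qed.

(* The period's data usage h~_t(W_t(lam)) = d x + r (x - a)^+ is continuous in lam. *)
Lemma usage_cont l0 : 0 <= l0 ->
  cont_nonneg (fun l => htilde d r (fst (W du iu de ie c p d r th be l))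
                                    (snd (W du iu de ie c p d r th be l))) l0.
Proof.
  intros Hl0.
  apply (cont_ext (fun l => d * fst (W du iu de ie c p d r th be l)
                    + r * Rmax 0 (fst (W du iu de ie c p d r th be l) - a_val ie c p r be l))); auto.
  - intros l Hl. destruct (W_spec l Hl) as (_&_&Hz&_). unfold htilde. rewrite Hz. reflexivity.
  - apply cont_plus; apply cont_scal; [apply x_cont; auto|].
    apply cont_pos_part_sub; [apply x_cont | apply a_cont]; auto.
Qed.

End Period.

Lemma choice_on_range (A : Type) (a0 : A) (P : nat -> A -> Prop) (T : nat) :
  (forall t, (1 <= t <= T)%nat -> exists a, P t a) ->
  exists f : nat -> A, forall t, (1 <= t <= T)%nat -> P t (f t).
Proof.
  intros H.
  assert (H' : forall t, exists a, (1 <= t <= T)%nat -> P t a).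
  { intros t. destruct (le_dec 1 t); [destruct (le_dec t T)|].
    - destruct (H t ltac:(lia)) as [a Ha]. exists a. auto.
    - exists a0. lia.
    - exists a0. lia. }
  exists (fun t => proj1_sig (constructive_indefinite_description _ (H' t))).
  intros t. exact (proj2_sig (constructive_indefinite_description _ (H' t))).
Qed.

(* With the overage s = (S - Q)^+, the threshold property of lam in [0, pi]
   gives the constraints on s and complementary slackness for s >= 0
   (multiplier pi - lam) and for (C) (multiplier lam). *)
Lemma overage_slackness (S Q pi lam : R) :
  0 <= lam <= pi -> (lam < pi -> S <= Q) -> (0 < lam -> Q <= S) ->
  0 <= Rmax 0 (S - Q) /\ S - Q <= Rmax 0 (S - Q) /\
  (pi - lam) * Rmax 0 (S - Q) = 0 /\ lam * (Rmax 0 (S - Q) - (S - Q)) = 0.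
Proof.
  intros Hl Hbelow Habove. split; [apply Rmax_l|]. split; [apply Rmax_r|]. split.
  - destruct (Rlt_dec lam pi) as [h|h].
    + rewrite Rmax_left by (specialize (Hbelow h); lra). ring.
    + replace (pi - lam) with 0 by lra. ring.
  - destruct (Rlt_dec 0 lam) as [h|h].
    + rewrite Rmax_right by (specialize (Habove h); lra). ring.
    + replace lam with 0 by lra. ring.
Qed.

Lemma kkt_assembly (T : nat) (Q pi : R) (d r c p th be : nat -> R)
    (du de ie : nat -> R -> R) (x z : nat -> R) (lam : R) :
  let S := sum_n_m (fun t => htilde (d t) (r t) (x t) (z t)) 1 T in
  0 <= lam <= pi -> (lam < pi -> S <= Q) -> (0 < lam -> Q <= S) ->
  (forall t, (1 <= t <= T)%nat ->
     W_props (du t) (de t) (ie t) (c t) (p t) (d t) (r t) (th t) (be t) lam (x t) (z t)) ->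
  KKT_point T Q pi d r c p th be du de x z (Rmax 0 (S - Q)) lam.
Proof.
  intros S Hlam Hbelow Habove Hw.
  destruct (overage_slackness S Q pi lam Hlam Hbelow Habove) as (Hs0&HsS&Hnu&Hmu).
  destruct (choice_on_range (R * R * R) (0, 0, 0) (fun t m =>
     period_kkt (du t) (de t) (c t) (p t) (d t) (r t) (th t) (be t) lam (x t) (z t)
       (fst (fst m)) (snd (fst m)) (snd m)) T) as [m Hm].
  { intros t Ht. destruct (Hw t Ht) as (_&_&_&_&al&ga&dl&K). exists (al, ga, dl). exact K. }
  split; [intros t Ht; destruct (Hw t Ht) as (?&?&_); lra|].
  split; [exact Hs0|]. split; [exact HsS|].
  split; [intros t Ht; destruct (Hw t Ht) as (?&_); lra|].
  split; [lra|].
  exists (fun t => fst (fst (m t))), (fun t => snd (fst (m t))), (fun t => snd (m t)), (pi - lam).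
  split; [intros t Ht; destruct (Hm t Ht) as (?&?&?&_); auto|].
  split; [lra|].
  split; [intros t Ht; destruct (Hm t Ht) as (_&_&_&K&_); exact K|].
  split; [intros t Ht; destruct (Hm t Ht) as (_&_&_&_&K&_); exact K|].
  split; [ring|].
  split; [intros t Ht; destruct (Hm t Ht) as (_&_&_&_&_&K); exact K|].
  split; [exact Hnu | exact Hmu].
Qed.

Theorem theorem1 (T : nat) (Q pi : R) (d r c p th be : nat -> R)
    (u e du iu de ie : nat -> R -> R) :
  (1 <= T)%nat -> 0 < Q -> 0 < pi ->
  (forall t, (1 <= t <= T)%nat ->
     0 <= d t /\ 0 <= r t /\ 0 < c t /\ 0 < p t /\ 0 < th t /\ 0 < be t) ->
  (forall t, (1 <= t <= T)%nat -> u_hyp (u t) (du t) (iu t)) ->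
  (forall t, (1 <= t <= T)%nat -> e_hyp (e t) (de t) (ie t)) ->
  let lam := lam_star T Q pi d r c p th be du iu de ie in
  let xs := fun t => fst (W (du t) (iu t) (de t) (ie t) (c t) (p t) (d t) (r t)
                            (th t) (be t) lam) in
  let zs := fun t => snd (W (du t) (iu t) (de t) (ie t) (c t) (p t) (d t) (r t)
                            (th t) (be t) lam) in
  let s := Rmax 0 (sum_n_m (fun t => htilde (d t) (r t) (xs t) (zs t)) 1 T - Q) in
  KKT_point T Q pi d r c p th be du de xs zs s lam.
Proof.
  intros HT HQ Hpi Hpar HU HE lam xs zs s.
  (* the potential usage A is continuous, so lam_star has the threshold property *)
  assert (Hthr : 0 <= lam <= pi /\ (lam < pi -> A_usage T d r c p th be du iu de ie lam <= Q) /\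
                 (0 < lam -> Q <= A_usage T d r c p th be du iu de ie lam)).
  { apply (shadow_price_threshold (A_usage T d r c p th be du iu de ie) Q pi Hpi).
    intros l Hl. apply (cont_sum (fun t l => htilde (d t) (r t)
       (fst (W (du t) (iu t) (de t) (ie t) (c t) (p t) (d t) (r t) (th t) (be t) l))
       (snd (W (du t) (iu t) (de t) (ie t) (c t) (p t) (d t) (r t) (th t) (be t) l)))).
    intros t Ht. destruct (Hpar t Ht) as (?&?&?&?&?&?). eapply usage_cont; eauto. }
  destruct Hthr as (Hlam&Hbelow&Habove).
  apply kkt_assembly with (ie := ie); auto.
  intros t Ht. destruct (Hpar t Ht) as (?&?&?&?&?&?). eapply W_spec; eauto. lra.
Qed.
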